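(* For $k\ge1$ and real $x$ let $F_k(x)=\sum_{\nu=1}^k \frac{\sin(\nu x)}{\nu}$, and for $x\in(0,\pi)$ let $H(x)=\sum_{k=1}^\infty F_k(x)(\cos(x))^k$. Then for every $x\in(0,\pi)$, $$H(x)=\frac{\pi/2-x}{1-\cos(x)}.$$ In particular, $H$ is completely monotonic on $(0,\pi/2]$.
   Context: A function $f:I\to\mathbb{R}$ on an interval $I\subset\mathbb{R}$ is completely monotonic if it has derivatives of all orders and $(-1)^n f^{(n)}(x)\ge 0$ for all $n=0,1,2,\dots$ and $x\in I$. *)

From Stdlib Require Import Reals.
From Coquelicot Require Import Coquelicot.
Open Scope R_scope.

Definition F (k : nat) (x : R) : R :=
  sum_n_m (fun nu => sin (INR nu * x) / INR nu) 1 k.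

(* H(x) = sum_{k>=1} F_k(x) cos(x)^k  (Coquelicot's total Series operator;
   convergence on (0,pi) is part of the theorem). *)
Definition H (x : R) : R :=
  Series (fun k => F (S k) x * cos x ^ (S k)).

Definition completely_monotonic (f : R -> R) (I : R -> Prop) : Prop :=
  forall (n : nat) (x : R), I x ->
    ex_derive_n f n x /\ 0 <= (-1) ^ n * Derive_n f n x.

From Stdlib Require Import Reals Lra Lia List.
From Coquelicot Require Import Coquelicot.
Open Scope R_scope.

(* The series is the Cauchy product of the power series
   phi_x(t) = sum_n sin(n x)/n t^n with the geometric series 1/(1 - t), taken at
   t = cos x.  Termwise, phi_x'(t) = sin x / (1 - 2 t cos x + t^2), which is also
   the derivative of atan((t - cos x) / sin x); since phi_x(0) = 0 this gives
   phi_x(cos x) = atan(cot x) = pi/2 - x.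

   For complete monotonicity put w = cot(x/2) = sin x / (1 - cos x).  Then
   1/(1 - cos x) = (1 + w^2)/2 = -w', so (-1)^n times the n-th derivative of
   1/(1 - cos x) is a polynomial in w >= 0 with nonnegative coefficients.  The
   Leibniz rule for the product with pi/2 - x, which is nonnegative on (0, pi/2],
   then fixes the signs of all derivatives of H. *)

Fixpoint Peval (p : list R) (t : R) : R :=
  match p with nil => 0 | a :: q => a + t * Peval q t end.

Fixpoint Padd (p q : list R) : list R :=
  match p, q with
  | nil, _ => q
  | _, nil => p
  | a :: p', b :: q' => (a + b) :: Padd p' q'
  end.

Definition Pscale (c : R) (p : list R) : list R := map (Rmult c) p.

Fixpoint Pderiv (p : list R) : list R :=
  match p with nil => nil | a :: q => Padd q (0 :: Pderiv q) end.

Definition Pnonneg (p : list R) : Prop := List.Forall (Rle 0) p.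

Lemma Peval_Padd p q t : Peval (Padd p q) t = Peval p t + Peval q t.
Proof.
  revert q; induction p as [|a p IH]; intros [|b q]; simpl; try ring.
  rewrite IH; ring.
Qed.

Lemma Peval_Pscale c p t : Peval (Pscale c p) t = c * Peval p t.
Proof. induction p as [|a p IH]; simpl; [|rewrite IH]; ring. Qed.

Lemma is_derive_Peval p t : is_derive (Peval p) t (Peval (Pderiv p) t).
Proof.
  induction p as [|a p IH]; simpl.
  - apply (is_derive_const 0 t).
  - rewrite Peval_Padd; simpl.
    replace (Peval p t + (0 + t * Peval (Pderiv p) t))
      with (0 + (1 * Peval p t + t * Peval (Pderiv p) t)) by ring.
    apply (is_derive_plus (fun _ => a) (fun t => t * Peval p t)).
    + apply (is_derive_const a t).
    + apply (is_derive_mult (fun t => t) (Peval p)); auto using is_derive_id, Rmult_comm.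
Qed.

Lemma Pnonneg_Padd p q : Pnonneg p -> Pnonneg q -> Pnonneg (Padd p q).
Proof.
  revert q; induction p as [|a p IH]; intros [|b q] Hp Hq; simpl; auto.
  inversion_clear Hp as [|? ? Ha Hp']; inversion_clear Hq as [|? ? Hb Hq'].
  constructor; [apply Rplus_le_le_0_compat; assumption | apply IH; assumption].
Qed.

Lemma Pnonneg_Pscale c p : 0 <= c -> Pnonneg p -> Pnonneg (Pscale c p).
Proof.
  intros Hc Hp; induction Hp; constructor; auto.
  apply Rmult_le_pos; assumption.
Qed.

Lemma Pnonneg_Pderiv p : Pnonneg p -> Pnonneg (Pderiv p).
Proof.
  intros Hp; induction Hp as [|a p _ Hp IH]; simpl; [constructor|].
  apply Pnonneg_Padd; [exact Hp | constructor; [apply Rle_refl | exact IH]].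
Qed.

Lemma Peval_nonneg p t : Pnonneg p -> 0 <= t -> 0 <= Peval p t.
Proof.
  intros Hp Ht; induction Hp; simpl; [apply Rle_refl|].
  apply Rplus_le_le_0_compat; [assumption | apply Rmult_le_pos; assumption].
Qed.

Definition Pmul_half_1X2 (p : list R) : list R := Pscale (/ 2) (Padd p (0 :: 0 :: p)).

Lemma Peval_Pmul_half_1X2 p t : Peval (Pmul_half_1X2 p) t = Peval p t * ((1 + t ^ 2) / 2).
Proof. unfold Pmul_half_1X2; rewrite Peval_Pscale, Peval_Padd; simpl; field. Qed.

Lemma Pnonneg_Pmul_half_1X2 p : Pnonneg p -> Pnonneg (Pmul_half_1X2 p).
Proof.
  intros Hp; apply Pnonneg_Pscale; [lra|].
  apply Pnonneg_Padd; [exact Hp | repeat constructor; auto; lra].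
Qed.

Definition derivative_chain (U : R -> Prop) (g : nat -> R -> R) : Prop :=
  forall n x, U x -> is_derive (g n) x (g (S n) x).

Lemma Derive_n_derivative_chain U g n x :
  open U -> derivative_chain U g -> U x ->
  ex_derive_n (g O) n x /\ Derive_n (g O) n x = g n x.
Proof.
  intros HU Hg; revert x; induction n as [|n IH]; intros x Hx.
  - split; reflexivity.
  - assert (Hloc : locally x (fun t => g n t = Derive_n (g O) n t)).
    { apply (filter_imp U); [|exact (HU x Hx)].
      intros t Ht; symmetry; apply IH, Ht. }
    split; simpl.
    + apply (ex_derive_ext_loc _ _ _ Hloc); eexists; apply Hg, Hx.
    + rewrite <- (Derive_ext_loc _ _ _ Hloc). apply is_derive_unique, Hg, Hx.
Qed.

Lemma completely_monotonic_derivative_chain (f : R -> R) (U I : R -> Prop) g :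
  open U -> derivative_chain U g -> (forall x, U x -> f x = g O x) ->
  (forall x, I x -> U x) -> (forall n x, I x -> 0 <= (-1) ^ n * g n x) ->
  completely_monotonic f I.
Proof.
  intros HU Hg Hf HIU Hsign n x Hx.
  assert (Hloc : locally x (fun t => g O t = f t)).
  { apply (filter_imp U); [|exact (HU x (HIU x Hx))].
    intros t Ht; symmetry; apply Hf, Ht. }
  destruct (Derive_n_derivative_chain U g n x HU Hg (HIU x Hx)) as [Hex HD].
  split.
  - exact (ex_derive_n_ext_loc _ _ n x Hloc Hex).
  - rewrite <- (Derive_n_ext_loc _ _ n x Hloc), HD. apply Hsign, Hx.
Qed.

(* Leibniz's rule for (c - x) * g 0; at n = 0 the junk term [g (pred 0)] gets
   the factor 0. *)
Definition mul_linear_chain (c : R) (g : nat -> R -> R) (n : nat) (x : R) : R :=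
  (c - x) * g n x - INR n * g (pred n) x.

Lemma derivative_chain_mul_linear U c g :
  derivative_chain U g -> derivative_chain U (mul_linear_chain c g).
Proof.
  intros Hg n x Hx; unfold mul_linear_chain.
  replace ((c - x) * g (S n) x - INR (S n) * g (pred (S n)) x)
    with ((-1 * g n x + (c - x) * g (S n) x) - INR n * g (S (pred n)) x)
    by (destruct n; simpl pred; rewrite ?S_INR; simpl INR; ring).
  apply (is_derive_minus (fun x => (c - x) * g n x) (fun x => INR n * g (pred n) x)).
  - apply (is_derive_mult (fun x => c - x) (g n)); auto using Rmult_comm.
    auto_derive; [exact I | ring].
  - apply (is_derive_scal (g (pred n))), Hg, Hx.
Qed.

Lemma alternating_mul_linear c g n x :
  x <= c -> (forall k, 0 <= (-1) ^ k * g k x) ->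
  0 <= (-1) ^ n * mul_linear_chain c g n x.
Proof.
  intros Hxc Hg; unfold mul_linear_chain.
  destruct n as [|m].
  - simpl; specialize (Hg O); simpl in Hg; nra.
  - replace ((-1) ^ S m * ((c - x) * g (S m) x - INR (S m) * g (pred (S m)) x))
      with ((c - x) * ((-1) ^ S m * g (S m) x) + INR (S m) * ((-1) ^ m * g m x))
      by (simpl; ring).
    pose proof (Hg (S m)); pose proof (Hg m); pose proof (pos_INR (S m)).
    apply Rplus_le_le_0_compat; apply Rmult_le_pos; lra.
Qed.

Definition cot_half (x : R) : R := sin x / (1 - cos x).

Lemma one_sub_cos_pos x : 0 < x < PI -> 0 < 1 - cos x.
Proof.
  intros Hx. pose proof (sin_gt_0 x (proj1 Hx) (proj2 Hx)).
  pose proof (sin2_cos2 x). pose proof (COS_bound x). unfold Rsqr in *. nra.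
Qed.

Lemma Rabs_cos_lt_1 x : 0 < x < PI -> Rabs (cos x) < 1.
Proof.
  intros Hx. pose proof (sin_gt_0 x (proj1 Hx) (proj2 Hx)).
  pose proof (sin2_cos2 x). unfold Rsqr in *. apply Rabs_def1; nra.
Qed.

Lemma cot_half_nonneg x : 0 < x < PI -> 0 <= cot_half x.
Proof.
  intros Hx. pose proof (sin_gt_0 x (proj1 Hx) (proj2 Hx)).
  pose proof (one_sub_cos_pos x Hx).
  apply Rlt_le, Rdiv_lt_0_compat; assumption.
Qed.

Lemma inv_one_sub_cos x : 0 < x < PI -> / (1 - cos x) = (1 + cot_half x ^ 2) / 2.
Proof.
  intros Hx. pose proof (one_sub_cos_pos x Hx). pose proof (sin2_cos2 x).
  unfold cot_half, Rsqr in *.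
  replace (1 + (sin x / (1 - cos x)) ^ 2)
    with (((1 - cos x) ^ 2 + sin x * sin x) / (1 - cos x) ^ 2) by (field; lra).
  replace (sin x * sin x) with (1 - cos x * cos x) by lra. field. lra.
Qed.

Lemma is_derive_cot_half x : 0 < x < PI ->
  is_derive cot_half x (- ((1 + cot_half x ^ 2) / 2)).
Proof.
  intros Hx. rewrite <- inv_one_sub_cos by exact Hx.
  pose proof (one_sub_cos_pos x Hx). pose proof (sin2_cos2 x). unfold Rsqr in *.
  unfold cot_half. auto_derive; [lra|].
  replace (sin x * (- - (1 * - sin x) * / ((1 + - cos x) * (1 + - cos x))))
    with (- (sin x * sin x) / ((1 - cos x) * (1 - cos x))) by (field; lra).
  replace (sin x * sin x) with ((1 - cos x) * (1 + cos x)) by lra.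
  field. lra.
Qed.

Fixpoint inv_versin_poly (n : nat) : list R :=
  match n with
  | O => Pmul_half_1X2 (1 :: nil)
  | S m => Pmul_half_1X2 (Pderiv (inv_versin_poly m))
  end.

Definition inv_versin_deriv (n : nat) (x : R) : R :=
  (-1) ^ n * Peval (inv_versin_poly n) (cot_half x).

Lemma inv_versin_deriv_0 x : 0 < x < PI -> inv_versin_deriv O x = / (1 - cos x).
Proof.
  intros Hx. rewrite inv_one_sub_cos by exact Hx.
  unfold inv_versin_deriv; simpl inv_versin_poly.
  rewrite Peval_Pmul_half_1X2; simpl; ring.
Qed.

Lemma derivative_chain_inv_versin :
  derivative_chain (fun x => 0 < x < PI) inv_versin_deriv.
Proof.
  intros n x Hx; unfold inv_versin_deriv.
  replace ((-1) ^ S n * Peval (inv_versin_poly (S n)) (cot_half x))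
    with ((-1) ^ n * (- ((1 + cot_half x ^ 2) / 2)
                      * Peval (Pderiv (inv_versin_poly n)) (cot_half x)))
    by (simpl inv_versin_poly; rewrite Peval_Pmul_half_1X2; simpl; ring).
  apply (is_derive_scal (fun x => Peval (inv_versin_poly n) (cot_half x))).
  apply (is_derive_comp (Peval (inv_versin_poly n)) cot_half).
  - apply is_derive_Peval.
  - apply is_derive_cot_half, Hx.
Qed.

Lemma Pnonneg_inv_versin_poly n : Pnonneg (inv_versin_poly n).
Proof.
  induction n as [|n IH]; simpl; apply Pnonneg_Pmul_half_1X2.
  - repeat constructor; lra.
  - apply Pnonneg_Pderiv, IH.
Qed.

Lemma inv_versin_deriv_alternating n x : 0 < x < PI ->
  0 <= (-1) ^ n * inv_versin_deriv n x.
Proof.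
  intros Hx; unfold inv_versin_deriv; rewrite <- Rmult_assoc, <- pow_add.
  replace (n + n)%nat with (2 * n)%nat by lia. rewrite pow_mult.
  replace ((-1) ^ 2) with 1 by ring. rewrite pow1, Rmult_1_l.
  apply Peval_nonneg; [apply Pnonneg_inv_versin_poly | apply cot_half_nonneg, Hx].
Qed.

Lemma quadratic_cos_pos x t : Rabs t < 1 -> 0 < 1 - 2 * t * cos x + t ^ 2.
Proof.
  intros Ht.
  assert (Htc : t * cos x <= Rabs t).
  { apply (Rle_trans _ (Rabs (t * cos x))); [apply Rle_abs|].
    rewrite Rabs_mult. rewrite <- (Rmult_1_r (Rabs t)) at 2.
    apply Rmult_le_compat_l; [apply Rabs_pos | apply Rabs_le, COS_bound]. }
  pose proof (Rabs_pos t). replace (t ^ 2) with (Rabs t ^ 2) by apply pow2_abs. nra.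
Qed.

Lemma sin_mul_SS x n :
  sin (INR (S (S n)) * x) + sin (INR n * x) = 2 * cos x * sin (INR (S n) * x).
Proof.
  replace (INR (S (S n)) * x) with (INR (S n) * x + x) by (rewrite !S_INR; ring).
  replace (INR n * x) with (INR (S n) * x - x) by (rewrite !S_INR; ring).
  rewrite sin_plus, sin_minus. ring.
Qed.

(* Multiplying by the denominator telescopes by the three-term recurrence [sin_mul_SS]. *)
Lemma sum_n_sin_mul_pow x t N :
  (1 - 2 * t * cos x + t ^ 2) * sum_n (fun k => sin (INR (S k) * x) * t ^ k) N
  = sin x - t ^ S N * sin (INR (S (S N)) * x) + t ^ S (S N) * sin (INR (S N) * x).
Proof.
  induction N as [|N IH].
  - rewrite sum_O. pose proof (sin_mul_SS x 0) as E.
    simpl INR in *. rewrite Rmult_0_l, sin_0, Rmult_1_l in *. simpl. nra.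
  - rewrite sum_Sn. change (plus ?u ?v) with (u + v).
    rewrite Rmult_plus_distr_l, IH. pose proof (sin_mul_SS x (S N)).
    simpl pow. nra.
Qed.

Lemma is_lim_seq_pow_mul_bounded (u : nat -> R) q :
  Rabs q < 1 -> (forall n, Rabs (u n) <= 1) -> is_lim_seq (fun n => q ^ n * u n) 0.
Proof.
  intros Hq Hu. apply is_lim_seq_abs_0.
  apply (is_lim_seq_le_le (fun _ => 0) _ (fun n => Rabs q ^ n)).
  - intros n. split; [apply Rabs_pos|].
    rewrite Rabs_mult, <- RPow_abs.
    pose proof (Hu n). pose proof (pow_le (Rabs q) n (Rabs_pos q)).
    pose proof (Rabs_pos (u n)). nra.
  - apply is_lim_seq_const.
  - apply is_lim_seq_geom. rewrite Rabs_Rabsolu. exact Hq.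
Qed.

Lemma is_series_sin_mul_pow x t : Rabs t < 1 ->
  is_series (fun k => sin (INR (S k) * x) * t ^ k) (sin x / (1 - 2 * t * cos x + t ^ 2)).
Proof.
  intros Ht. pose proof (quadratic_cos_pos x t Ht) as HD.
  assert (Hsin : forall n, Rabs (sin (INR n * x)) <= 1)
    by (intros n; apply Rabs_le, SIN_bound).
  enough (L : is_lim_seq (sum_n (fun k => sin (INR (S k) * x) * t ^ k))
                         (sin x / (1 - 2 * t * cos x + t ^ 2))) by exact L.
  apply (is_lim_seq_ext
    (fun N => (sin x - t * (t ^ N * sin (INR (S (S N)) * x))
               + t ^ 2 * (t ^ N * sin (INR (S N) * x))) / (1 - 2 * t * cos x + t ^ 2))).
  { intros N. apply (Rmult_eq_reg_l (1 - 2 * t * cos x + t ^ 2)); [|lra].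
    rewrite sum_n_sin_mul_pow. simpl pow. field. simpl in HD. lra. }
  replace (sin x / (1 - 2 * t * cos x + t ^ 2))
    with ((sin x - t * 0 + t ^ 2 * 0) / (1 - 2 * t * cos x + t ^ 2)) by (f_equal; ring).
  apply is_lim_seq_div'; [| apply is_lim_seq_const | lra].
  apply is_lim_seq_plus'; [apply is_lim_seq_minus'; [apply is_lim_seq_const|] |];
    apply is_lim_seq_mult'; try apply is_lim_seq_const;
    apply is_lim_seq_pow_mul_bounded; auto.
Qed.

Definition F_coef (x : R) (n : nat) : R := sin (INR n * x) / INR n.

Lemma F_coef_0 x : F_coef x 0 = 0.
Proof. unfold F_coef. simpl. rewrite Rmult_0_l, sin_0. apply Rmult_0_l. Qed.

Lemma Rabs_F_coef_le x n : Rabs (F_coef x n) <= 1.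
Proof.
  destruct n as [|n]; [rewrite F_coef_0, Rabs_R0; lra|].
  assert (HS : 1 <= INR (S n)) by (rewrite S_INR; pose proof (pos_INR n); lra).
  unfold F_coef, Rdiv. rewrite Rabs_mult, Rabs_inv, (Rabs_right (INR (S n))) by lra.
  apply (Rle_trans _ (Rabs (sin (INR (S n) * x)))); [|apply Rabs_le, SIN_bound].
  rewrite <- (Rmult_1_r (Rabs (sin (INR (S n) * x)))) at 2.
  apply Rmult_le_compat_l; [apply Rabs_pos|].
  rewrite <- Rinv_1. apply Rinv_le_contravar; lra.
Qed.

Lemma F_sum_n k x : F k x = sum_n (F_coef x) k.
Proof.
  unfold F, sum_n. destruct k as [|k].
  - rewrite sum_n_n, F_coef_0, sum_n_m_zero by lia. reflexivity.
  - rewrite (sum_n_m_Chasles _ 0 0 (S k)), sum_n_n, F_coef_0 by lia.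
    symmetry. exact (plus_zero_l _).
Qed.

Lemma CV_radius_ge_1 (c : nat -> R) t :
  (forall n, Rabs (c n) <= 1) -> Rabs t < 1 -> Rbar_lt (Rabs t) (CV_radius c).
Proof.
  intros Hc Ht. apply (Rbar_lt_le_trans _ (Finite 1)); [exact Ht|].
  apply (proj1 (CV_radius_bounded c)). exists 1. intros n.
  rewrite pow1, Rmult_1_r. apply Hc.
Qed.

Lemma is_derive_PSeries_F_coef x t : Rabs t < 1 ->
  is_derive (PSeries (F_coef x)) t (sin x / (1 - 2 * t * cos x + t ^ 2)).
Proof.
  intros Ht. replace (sin x / (1 - 2 * t * cos x + t ^ 2))
    with (PSeries (PS_derive (F_coef x)) t).
  - apply is_derive_PSeries, CV_radius_ge_1; [apply Rabs_F_coef_le | exact Ht].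
  - unfold PSeries. rewrite (Series_ext _ (fun k => sin (INR (S k) * x) * t ^ k)).
    + apply is_series_unique, is_series_sin_mul_pow, Ht.
    + intros n. unfold PS_derive, F_coef. field. apply not_0_INR. lia.
Qed.

Lemma is_derive_atan_cot x t : 0 < sin x ->
  is_derive (fun t => atan ((t - cos x) / sin x)) t (sin x / (1 - 2 * t * cos x + t ^ 2)).
Proof.
  intros Hs. pose proof (sin2_cos2 x). unfold Rsqr in *.
  auto_derive; [exact I|].
  replace (1 - 2 * t * cos x + t ^ 2) with ((t - cos x) ^ 2 + sin x ^ 2) by nra.
  pose proof (pow2_ge_0 (t - cos x)). pose proof (pow_lt (sin x) 2 Hs).
  field. split; lra.
Qed.

Lemma is_derive_same_diff (f g df : R -> R) (a b : R) :
  (forall t, Rmin a b <= t <= Rmax a b -> is_derive f t (df t) /\ is_derive g t (df t)) ->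
  f b - f a = g b - g a.
Proof.
  intros Hfg.
  assert (Hd : forall t, Rmin a b <= t <= Rmax a b ->
                 is_derive (fun t => f t - g t) t 0).
  { intros t Ht. destruct (Hfg t Ht) as [Hf Hg].
    replace 0 with (df t - df t) by ring. apply (is_derive_minus f g); assumption. }
  destruct (MVT_gen (fun t => f t - g t) a b (fun _ => 0)) as [c [_ Hc]].
  - intros t Ht. apply Hd. lra.
  - intros t Ht. apply continuity_pt_filterlim.
    apply (@ex_derive_continuous R_AbsRing R_NormedModule (fun t => f t - g t)).
    eexists. apply Hd, Ht.
  - lra.
Qed.

Lemma PSeries_F_coef x t : 0 < x < PI -> Rabs t < 1 ->
  PSeries (F_coef x) t = atan ((t - cos x) / sin x) + atan (cos x / sin x).
Proof.
  intros Hx Ht. pose proof (sin_gt_0 x (proj1 Hx) (proj2 Hx)) as Hs.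
  assert (Hseg : forall u, Rmin 0 t <= u <= Rmax 0 t -> Rabs u < 1).
  { intros u Hu. apply Rabs_def2 in Ht. apply Rabs_def1.
    - pose proof (Rmax_lub_lt 0 t 1 ltac:(lra) ltac:(lra)). lra.
    - pose proof (Rmin_glb_lt 0 t (-1) ltac:(lra) ltac:(lra)). lra. }
  assert (E : PSeries (F_coef x) t - PSeries (F_coef x) 0
              = atan ((t - cos x) / sin x) - atan ((0 - cos x) / sin x)).
  { apply (is_derive_same_diff _ (fun t => atan ((t - cos x) / sin x))
             (fun t => sin x / (1 - 2 * t * cos x + t ^ 2))).
    intros u Hu. split.
    - apply is_derive_PSeries_F_coef, Hseg, Hu.
    - apply is_derive_atan_cot, Hs. }
  rewrite PSeries_0, F_coef_0 in E.
  replace ((0 - cos x) / sin x) with (- (cos x / sin x)) in E by (field; lra).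
  rewrite atan_opp in E. lra.
Qed.

Lemma PSeries_F_coef_cos x : 0 < x < PI -> PSeries (F_coef x) (cos x) = PI / 2 - x.
Proof.
  intros Hx. pose proof (sin_gt_0 x (proj1 Hx) (proj2 Hx)) as Hs.
  rewrite PSeries_F_coef by auto using Rabs_cos_lt_1.
  replace ((cos x - cos x) / sin x) with 0 by (field; lra).
  replace (cos x / sin x) with (tan (PI / 2 - x))
    by (unfold tan; rewrite sin_shift, cos_shift; reflexivity).
  rewrite atan_0, atan_tan; lra.
Qed.

(* Cauchy product of [sum_n F_coef x n t^n] with the geometric series. *)
Lemma is_series_F_mul_pow x t : Rabs t < 1 ->
  is_series (fun n => F n x * t ^ n) (PSeries (F_coef x) t / (1 - t)).
Proof.
  intros Ht.
  assert (Hcv : Rbar_lt (Rabs t) (CV_radius (F_coef x)))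
    by (apply CV_radius_ge_1; [apply Rabs_F_coef_le | exact Ht]).
  apply (is_series_ext (fun n => sum_f_R0 (fun k => F_coef x k * t ^ k * t ^ (n - k)) n)).
  - intros n. rewrite F_sum_n, sum_n_Reals, Rmult_comm, scal_sum.
    apply sum_eq. intros k Hk.
    rewrite Rmult_assoc, <- pow_add. do 2 f_equal. lia.
  - apply is_series_mult.
    + apply is_pseries_R, PSeries_correct, CV_radius_inside, Hcv.
    + apply is_series_geom, Ht.
    + apply CV_disk_inside, Hcv.
    + apply (ex_series_ext (fun n => Rabs t ^ n)); [intros n; apply RPow_abs|].
      eexists. apply is_series_geom. rewrite Rabs_Rabsolu. exact Ht.
Qed.

Lemma F_0 x : F 0 x = 0.
Proof. unfold F. rewrite sum_n_m_zero by lia. reflexivity. Qed.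

Lemma is_series_H x : 0 < x < PI ->
  is_series (fun k => F (S k) x * cos x ^ S k) ((PI / 2 - x) / (1 - cos x)).
Proof.
  intros Hx. apply (is_series_incr_1 (fun n => F n x * cos x ^ n)).
  rewrite F_0, Rmult_0_l. change (plus ?l 0) with (l + 0).
  rewrite Rplus_0_r, <- PSeries_F_coef_cos by exact Hx.
  apply is_series_F_mul_pow, Rabs_cos_lt_1, Hx.
Qed.

Theorem corollary2 :
  (forall x : R, 0 < x < PI ->
     is_series (fun k => F (S k) x * cos x ^ (S k))
               ((PI / 2 - x) / (1 - cos x))) /\
  (forall x : R, 0 < x < PI -> H x = (PI / 2 - x) / (1 - cos x)) /\
  completely_monotonic H (fun x => 0 < x <= PI / 2).
Proof.
  assert (H_eq : forall x, 0 < x < PI -> H x = (PI / 2 - x) / (1 - cos x))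
    by (intros x Hx; apply is_series_unique, is_series_H, Hx).
  split; [exact is_series_H | split; [exact H_eq |]].
  apply (completely_monotonic_derivative_chain _ (fun x => 0 < x < PI) _
           (mul_linear_chain (PI / 2) inv_versin_deriv)).
  - apply open_and; [apply open_gt | apply open_lt].
  - apply derivative_chain_mul_linear, derivative_chain_inv_versin.
  - intros x Hx. rewrite H_eq by exact Hx. unfold mul_linear_chain.
    rewrite inv_versin_deriv_0 by exact Hx. simpl. field.
    pose proof (one_sub_cos_pos x Hx). lra.
  - intros x Hx. pose proof PI_RGT_0. lra.
  - intros n x Hx. apply alternating_mul_linear; [lra|].
    intros k. apply inv_versin_deriv_alternating. pose proof PI_RGT_0. lra.
Qed.
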